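(* Let $\mathfrak n$ be a seven-dimensional two-step nilpotent real Lie algebra with an invariant scalar product $\langle\cdot,\cdot\rangle$ of index three. Then $\mathrm{ad}(\mathfrak n)$ is not contained in $\mathfrak g_{2(2)}$, where $\mathfrak g_{2(2)}$ is regarded as a subalgebra of $\mathfrak{so}(\mathfrak n,\langle\cdot,\cdot\rangle)\cong\mathfrak{so}_{4,3}$ (i.e. there is no three-form on $\mathfrak n$ of $\mathrm G_{2(2)}$-type compatible with $\langle\cdot,\cdot\rangle$ that is annihilated by $\mathrm{ad}(x)$ for all $x\in\mathfrak n$).
   Context: An invariant scalar product is a nondegenerate symmetric bilinear form satisfying $\langle[x,y],z\rangle=\langle x,[y,z]\rangle$; index three on a seven-dimensional space means signature $(4,3)$ or $(3,4)$. $\mathfrak{so}(\mathfrak n,\langle\cdot,\cdot\rangle)$ is the Lie algebra of endomorphisms skew-symmetric for $\langle\cdot,\cdot\rangle$. $\mathfrak g_{2(2)}$ is the Lie algebra of the split real form $\mathrm G_{2(2)}$ of $\mathrm G_2^{\mathbb C}$, which is the stabilizer subalgebra in $\mathfrak{so}_{4,3}$ of a certain (generic, split-type) three-form. A Lie algebra is two-step nilpotent if $[\mathfrak n,[\mathfrak n,\mathfrak n]]=0$ but $[\mathfrak n,\mathfrak n]\neq 0$. *)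

From HB Require Import structures.
From mathcomp Require Import all_boot all_order all_algebra.
Set Implicit Arguments. Unset Strict Implicit. Unset Printing Implicit Defensive.
Import Order.TTheory GRing.Theory Num.Theory.
Local Open Scope ring_scope.

(* A seven-dimensional real Lie algebra is modelled on coordinate space
   'rV[R]_7 (the theorem takes R : realType, i.e. the real numbers) with
   bracket given by structure constants c i j k : [e_i, e_j] = sum_k c i j k e_k. *)

Section Defs.
Variable R : realFieldType.

Definition vec := 'rV[R]_7.

Definition br (c : 'I_7 -> 'I_7 -> 'I_7 -> R) (x y : vec) : vec :=
  \row_k \sum_i \sum_j x 0 i * y 0 j * c i j k.

Definition is_lie_algebra (c : 'I_7 -> 'I_7 -> 'I_7 -> R) : Prop :=
  (forall x : vec, br c x x = 0) /\
  (forall x y z : vec,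
      br c x (br c y z) + br c y (br c z x) + br c z (br c x y) = 0).

Definition two_step_nilpotent (c : 'I_7 -> 'I_7 -> 'I_7 -> R) : Prop :=
  (forall x y z : vec, br c x (br c y z) = 0) /\
  (exists x y : vec, br c x y != 0).

Definition bform (S : 'M[R]_7) (x y : vec) : R := (x *m S *m y^T) 0 0.

Definition eta : 'M[R]_7 :=
  diag_mx (\row_(i < 7) if (i < 3)%N then 1 else -1).

Definition scalar_product (S : 'M[R]_7) : Prop :=
  S^T = S /\ \det S != 0.

(* index three on a 7-dimensional space: signature (3,4) or (4,3),
   i.e. S is congruent to eta = diag(1,1,1,-1,-1,-1,-1) or to -eta *)
Definition index_three (S : 'M[R]_7) : Prop :=
  exists P : 'M[R]_7, P \in unitmx /\
    (P *m S *m P^T = eta \/ P *m S *m P^T = - eta).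

Definition invariant_form (c : 'I_7 -> 'I_7 -> 'I_7 -> R) (S : 'M[R]_7) : Prop :=
  forall x y z : vec, bform S (br c x y) z = bform S x (br c y z).

Definition tri (T : 'I_7 -> 'I_7 -> 'I_7 -> R) (x y z : vec) : R :=
  \sum_i \sum_j \sum_k T i j k * x 0 i * y 0 j * z 0 k.

Definition alternating (T : 'I_7 -> 'I_7 -> 'I_7 -> R) : Prop :=
  forall i j k, T i j k = - T j i k /\ T i j k = - T i k j.

Definition e3 (a b c : nat) (x y z : vec) : R :=
  let X n := x 0 (inord n) in let Y n := y 0 (inord n) in
  let Z n := z 0 (inord n) in
  X a * (Y b * Z c - Y c * Z b) - X b * (Y a * Z c - Y c * Z a)
  + X c * (Y a * Z b - Y b * Z a).

(* the standard split G_2 three-form (0-indexed):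
   e123 - e145 - e167 - e246 + e257 + e347 + e356 (1-indexed), whose
   stabilizer in gl_7 is g_{2(2)}, contained in so(eta) *)
Definition phi0 (x y z : vec) : R :=
  e3 0 1 2 x y z - e3 0 3 4 x y z - e3 0 5 6 x y z - e3 1 3 5 x y z
  + e3 1 4 6 x y z + e3 2 3 6 x y z + e3 2 4 5 x y z.

(* T is a three-form of G_{2(2)}-type compatible with S: in some basis
   (the rows of P) it is the standard split form phi0, and in that basis
   S is a nonzero multiple of the metric eta induced by phi0 *)
Definition G22_compatible (T : 'I_7 -> 'I_7 -> 'I_7 -> R) (S : 'M[R]_7) : Prop :=
  alternating T /\
  exists P : 'M[R]_7, exists l : R, P \in unitmx /\ l != 0 /\
    (forall x y z : vec, tri T (x *m P) (y *m P) (z *m P) = phi0 x y z) /\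
    P *m S *m P^T = l *: eta.

Definition ad_invariant (c : 'I_7 -> 'I_7 -> 'I_7 -> R)
    (T : 'I_7 -> 'I_7 -> 'I_7 -> R) : Prop :=
  forall x y z w : vec,
    tri T (br c x y) z w + tri T y (br c x z) w + tri T y z (br c x w) = 0.

End Defs.

From Pilot Require Import Defs.
From mathcomp Require Import all_boot all_order all_algebra.
From mathcomp Require Import reals.
From mathcomp Require Import ring lra.
Set Implicit Arguments. Unset Strict Implicit. Unset Printing Implicit Defensive.
Import Order.TTheory GRing.Theory Num.Theory.
Local Open Scope ring_scope.

(* In a basis in which the
   three-form is the standard phi0 and the scalar product is a multiple of
   eta, the structure constants F(x, y, z) = <[x, y], z> form an alternating
   three-form, and ad-invariance says that each contraction F(x, ., .), with
   its last index raised by eta, is a derivation of phi0, i.e. lies in g2.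
   Evaluating the derivation identity on basis vectors gives linear equations
   forcing all 35 coefficients of F to vanish, so the bracket is zero, which
   contradicts two-step nilpotency. *)

Section Bracket.
Variables (R : realFieldType) (c : 'I_7 -> 'I_7 -> 'I_7 -> R).
Implicit Types x y z : vec R.

Definition ad_mx x : 'M[R]_7 := \matrix_(j, k) (\sum_i x 0 i * c i j k).
Definition adr_mx y : 'M[R]_7 := \matrix_(i, k) (\sum_j y 0 j * c i j k).

Lemma br_ad_mx x y : br c x y = y *m ad_mx x.
Proof.
apply/rowP => k; rewrite !mxE exchange_big; apply: eq_bigr => j _.
by rewrite !mxE mulr_sumr; apply: eq_bigr => i _; rewrite mulrA [y 0 j * _]mulrC.
Qed.

Lemma br_adr_mx x y : br c x y = x *m adr_mx y.
Proof.
apply/rowP => k; rewrite !mxE; apply: eq_bigr => i _.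
by rewrite !mxE mulr_sumr; apply: eq_bigr => j _; rewrite mulrA.
Qed.

Lemma brDl x y z : br c (x + y) z = br c x z + br c y z.
Proof. by rewrite !br_adr_mx mulmxDl. Qed.

Lemma brDr x y z : br c x (y + z) = br c x y + br c x z.
Proof. by rewrite !br_ad_mx mulmxDl. Qed.

Lemma br_anti : (forall x, br c x x = 0) -> forall x y, br c x y = - br c y x.
Proof.
move=> br_xx x y; have := br_xx (x + y).
by rewrite brDl !brDr !br_xx add0r addr0 => /eqP; rewrite addr_eq0 => /eqP.
Qed.

Lemma br_eq0_rows (P : 'M[R]_7) : P \in unitmx ->
  (forall i j, br c (row i P) (row j P) = 0) -> forall x y, br c x y = 0.
Proof.
move=> P_unit br_rows x y.
rewrite -(mulmxKV P_unit x) (mulmx_sum_row (x *m invmx P)) br_adr_mx mulmx_suml.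
rewrite big1 // => i _; rewrite -scalemxAl -br_adr_mx br_ad_mx.
rewrite -(mulmxKV P_unit y) (mulmx_sum_row (y *m invmx P)) mulmx_suml.
by rewrite big1 ?scaler0 // => j _; rewrite -scalemxAl -br_ad_mx br_rows scaler0.
Qed.

End Bracket.

Section Forms.
Variable R : realFieldType.
Implicit Types (S P : 'M[R]_7) (u v : vec R).

Lemma bform_sym S u v : S^T = S -> bform S u v = bform S v u.
Proof.
move=> S_sym; rewrite /bform.
have -> : v *m S *m u^T = (u *m S *m v^T)^T by rewrite !trmx_mul trmxK S_sym mulmxA.
by rewrite [RHS]mxE.
Qed.

Lemma bformNl S u v : bform S (- u) v = - bform S u v.
Proof. by rewrite /bform !mulNmx mxE. Qed.

Lemma bform_congr S P u v : bform S (u *m P) (v *m P) = bform (P *m S *m P^T) u v.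
Proof. by rewrite /bform trmx_mul !mulmxA. Qed.

Lemma bformZ a S u v : bform (a *: S) u v = a * bform S u v.
Proof. by rewrite /bform -scalemxAr -scalemxAl mxE. Qed.

Definition eta_sign (k : nat) : R := if (k < 3)%N then 1 else -1.

Lemma eta_sign2 k : eta_sign k * eta_sign k = 1.
Proof. by rewrite /eta_sign; case: ifP => _; rewrite ?mulr1 ?mulrNN ?mulr1. Qed.

Lemma bform_eta_delta u k : bform (@Defs.eta R) u (delta_mx 0 k) = eta_sign k * u 0 k.
Proof. by rewrite /bform trmx_delta -colE /eta mul_mx_diag !mxE mulrC. Qed.

Section InvariantForm.
Variables (c : 'I_7 -> 'I_7 -> 'I_7 -> R) (S : 'M[R]_7).
Hypotheses (br_xx : forall x : vec R, br c x x = 0) (S_sym : S^T = S)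
  (S_inv : invariant_form c S).

Lemma invariant_form_cycle x y z :
  bform S (br c x y) z = bform S (br c y z) x.
Proof. by rewrite S_inv bform_sym. Qed.

Lemma invariant_form_swap x y z :
  bform S (br c x y) z = - bform S (br c y x) z.
Proof. by rewrite (br_anti br_xx) bformNl. Qed.

End InvariantForm.
End Forms.

Arguments eta_sign {R} k.

Section Phi0.
Variable R : realFieldType.
Implicit Types x y z : vec R.

Definition alt_ext (G : nat -> nat -> nat -> R) (p q r : nat) : R :=
  if (p < q)%N then
    if (q < r)%N then G p q r
    else if (r < q)%N then
      (if (p < r)%N then - G p r q else if (r < p)%N then G r p q else 0)
    else 0
  else if (q < p)%N then
    if (p < r)%N then - G q p r
    else if (r < p)%N then
      (if (q < r)%N then G q r p else if (r < q)%N then - G r q p else 0)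
    else 0
  else 0.

Definition phi0_sorted (p q r : nat) : R :=
  match p, q, r with
  | 0, 1, 2 => 1%R | 0, 3, 4 => -1%R | 0, 5, 6 => -1%R | 1, 3, 5 => -1%R
  | 1, 4, 6 => 1%R | 2, 3, 6 => 1%R | 2, 4, 5 => 1%R | _, _, _ => 0%R
  end%N.

Definition phi0_coef : nat -> nat -> nat -> R := alt_ext phi0_sorted.

Lemma phi0_expand x y z : phi0 x y z =
  \sum_(0 <= a < 7) \sum_(0 <= b < 7) \sum_(0 <= c < 7)
    phi0_coef a b c * x 0 (inord a) * y 0 (inord b) * z 0 (inord c).
Proof. rewrite unlock /= /phi0_coef /alt_ext /phi0 /e3 /=; ring. Qed.

Definition unit_vec (b : nat) : vec R := delta_mx 0 (inord b).

Lemma unit_vec_inord b n : (b < 7)%N -> (n < 7)%N ->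
  unit_vec b 0 (inord n) = (b == n)%:R.
Proof. by move=> b7 n7; rewrite mxE eqxx -val_eqE /= !inordK // eq_sym. Qed.

Lemma sum_unit_vec (f : nat -> R) b : (b < 7)%N ->
  \sum_(0 <= n < 7) f n * unit_vec b 0 (inord n) = f b.
Proof.
move=> b7; rewrite big_mkord (bigD1 (Ordinal b7)) //= unit_vec_inord // eqxx mulr1.
rewrite big1 ?addr0 // => n neq_nb; rewrite unit_vec_inord //.
by rewrite eq_sym -(inj_eq val_inj) /= in neq_nb; rewrite (negbTE neq_nb) mulr0.
Qed.

Lemma phi0_unit_vecs x b c : (b < 7)%N -> (c < 7)%N ->
  phi0 x (unit_vec b) (unit_vec c) = \sum_(0 <= n < 7) phi0_coef n b c * x 0 (inord n).
Proof.
move=> b7 c7; rewrite phi0_expand; apply: eq_bigr => a _.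
under eq_bigr do rewrite sum_unit_vec //.
by rewrite sum_unit_vec // mulrC.
Qed.

Lemma phi0_swap12 x y z : phi0 x y z = - phi0 y x z.
Proof. rewrite /phi0 /e3 /=; ring. Qed.

Lemma phi0_cycle x y z : phi0 x y z = phi0 z x y.
Proof. rewrite /phi0 /e3 /=; ring. Qed.

Definition der_phi0 (M : 'M[R]_7) : Prop :=
  forall x y z, phi0 (x *m M) y z + phi0 x (y *m M) z + phi0 x y (z *m M) = 0.

Definition contraction_mx (F : 'I_7 -> 'I_7 -> 'I_7 -> R) (i : 'I_7) : 'M[R]_7 :=
  \matrix_(j, k) (eta_sign k * F i j k).

Lemma alt_ext_eq0 (G : nat -> nat -> nat -> R) :
  (forall p q r, (p < q)%N -> (q < r)%N -> (r < 7)%N -> G p q r = 0) ->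
  forall p q r, (p < 7)%N -> (q < 7)%N -> (r < 7)%N -> alt_ext G p q r = 0.
Proof.
move=> G0 p q r p7 q7 r7; rewrite /alt_ext.
by repeat case: ltnP => ?; rewrite ?G0 ?oppr0.
Qed.

Section AlternatingContractions.
Variable F : 'I_7 -> 'I_7 -> 'I_7 -> R.
Hypothesis F_alt : alternating F.

Definition coord3 (p q r : nat) : R := F (inord p) (inord q) (inord r).
Arguments coord3 : simpl never.

Lemma coord3_alt_ext p q r : coord3 p q r = alt_ext coord3 p q r.
Proof.
rewrite /alt_ext /coord3.
have sw12 i j k : F i j k = - F j i k by case: (F_alt i j k).
have sw23 i j k : F i j k = - F i k j by case: (F_alt i j k).
have diag12 i k : F i i k = 0 by have := sw12 i i k; lra.
have diag23 i j : F i j j = 0 by have := sw23 i j j; lra.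
have diag13 i j : F i j i = 0 by rewrite sw23 diag12 oppr0.
case: (ltngtP p q) => [pq|qp|<-] /=; last by rewrite diag12.
- case: (ltngtP q r) => [//|rq|<-] /=; last by rewrite diag23.
  case: (ltngtP p r) => [pr|rp|<-] /=; last by rewrite diag13.
  + by rewrite sw23.
  + by rewrite sw23 sw12 opprK.
- case: (ltngtP p r) => [pr|rp|<-] /=; first by rewrite sw12.
  + case: (ltngtP q r) => [qr|rq|<-] /=; last by rewrite diag23.
    * by rewrite sw12 sw23 opprK.
    * by rewrite sw12 sw23 sw12 opprK.
  + by rewrite diag13.
Qed.

Hypothesis F_der : forall i, der_phi0 (contraction_mx F i).

Lemma der_phi0_unit_vecs i a b c : [&& a < 7, b < 7 & c < 7]%N ->
  \sum_(0 <= n < 7) eta_sign n * (phi0_coef n b c * coord3 i a n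
     - phi0_coef n a c * coord3 i b n + phi0_coef n a b * coord3 i c n) = 0.
Proof.
move=> /and3P[a7 b7 c7]; have := F_der (inord i) (unit_vec a) (unit_vec b) (unit_vec c).
rewrite (phi0_swap12 (unit_vec a)) (phi0_cycle (unit_vec a)) !phi0_unit_vecs //.
rewrite -sumrN -!big_split /= => {2}<-; apply: eq_big_nat => n /andP[_ n7].
rewrite /unit_vec /coord3 -!rowE !mxE inordK //; ring.
Qed.

(* Earlier blocks are cleared: they are useless to lra and slow it down. *)
Ltac solve_block :=
  clear -F_alt; rewrite unlock /= !coord3_alt_ext /phi0_coef /alt_ext /eta_sign /=;
  move=> *; do ![split]; lra.

(* The 35 increasing coordinates split into seven linear systems in four
   unknowns and one in the seven unknowns on which phi0 is supported; each
   system comes from the derivation identity at the listed (i; a, b, c). *)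
Lemma coord3_increasing_eq0 p q r :
  (p < q)%N -> (q < r)%N -> (r < 7)%N -> coord3 p q r = 0.
Proof.
have E := @der_phi0_unit_vecs.
have [h014 h023 h126 h346] :
    [/\ coord3 0 1 4 = 0, coord3 0 2 3 = 0, coord3 1 2 6 = 0 & coord3 3 4 6 = 0].
  move: (E 0 0 1 3 isT) (E 1 0 1 6 isT) (E 2 0 1 5 isT) (E 3 0 3 6 isT).
  by solve_block.
have [h013 h024 h125 h345] :
    [/\ coord3 0 1 3 = 0, coord3 0 2 4 = 0, coord3 1 2 5 = 0 & coord3 3 4 5 = 0].
  move: (E 0 0 1 4 isT) (E 1 0 1 5 isT) (E 2 0 1 6 isT) (E 3 0 3 5 isT).
  by solve_block.
have [h016 h025 h124 h456] :
    [/\ coord3 0 1 6 = 0, coord3 0 2 5 = 0, coord3 1 2 4 = 0 & coord3 4 5 6 = 0].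
  move: (E 0 0 1 5 isT) (E 1 0 1 4 isT) (E 2 0 1 3 isT) (E 4 1 3 6 isT).
  by solve_block.
have [h015 h026 h123 h356] :
    [/\ coord3 0 1 5 = 0, coord3 0 2 6 = 0, coord3 1 2 3 = 0 & coord3 3 5 6 = 0].
  move: (E 0 0 1 6 isT) (E 1 0 1 3 isT) (E 2 0 1 4 isT) (E 3 1 3 6 isT).
  by solve_block.
have [h036 h045 h234 h256] :
    [/\ coord3 0 3 6 = 0, coord3 0 4 5 = 0, coord3 2 3 4 = 0 & coord3 2 5 6 = 0].
  move: (E 0 0 3 5 isT) (E 2 1 3 6 isT) (E 3 0 1 4 isT) (E 4 0 1 3 isT).
  by solve_block.
have [h035 h046 h134 h156] :
    [/\ coord3 0 3 5 = 0, coord3 0 4 6 = 0, coord3 1 3 4 = 0 & coord3 1 5 6 = 0].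
  move: (E 0 0 3 6 isT) (E 1 1 3 6 isT) (E 3 0 1 3 isT) (E 4 0 1 4 isT).
  by solve_block.
have [h136 h145 h235 h246] :
    [/\ coord3 1 3 6 = 0, coord3 1 4 5 = 0, coord3 2 3 5 = 0 & coord3 2 4 6 = 0].
  move: (E 1 0 3 5 isT) (E 2 0 3 6 isT) (E 3 0 1 5 isT) (E 5 0 1 3 isT).
  by solve_block.
have [h012 h034 h056 [h135 h146 h236 h245]] :
    [/\ coord3 0 1 2 = 0, coord3 0 3 4 = 0, coord3 0 5 6 = 0 &
      [/\ coord3 1 3 5 = 0, coord3 1 4 6 = 0, coord3 2 3 6 = 0 & coord3 2 4 5 = 0]].
  move: (E 0 1 3 6 isT) (E 1 0 3 6 isT) (E 2 0 3 5 isT) (E 3 0 1 6 isT).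
  move: (E 4 0 1 5 isT) (E 5 0 1 4 isT) (E 6 0 1 3 isT).
  by solve_block.
move: p q r.
by case=> [|[|[|[|[|[|[|p]]]]]]] [|[|[|[|[|[|[|q]]]]]]] [|[|[|[|[|[|[|r]]]]]]] pq qr r7.
Qed.

Lemma contraction_der_phi0_eq0 i j k : F i j k = 0.
Proof.
have -> : F i j k = coord3 i j k by rewrite /coord3 !inord_val.
by rewrite coord3_alt_ext; apply: alt_ext_eq0 => //; apply: coord3_increasing_eq0.
Qed.

End AlternatingContractions.
End Phi0.

Section AdInvariantG22Form.
Variables (R : realFieldType) (c : 'I_7 -> 'I_7 -> 'I_7 -> R).
Variables (S P : 'M[R]_7) (l : R) (T : 'I_7 -> 'I_7 -> 'I_7 -> R).
Hypotheses (br_xx : forall x : vec R, br c x x = 0) (S_sym : S^T = S)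
  (S_inv : invariant_form c S) (P_unit : P \in unitmx) (l_neq0 : l != 0)
  (T_phi0 : forall x y z : vec R, tri T (x *m P) (y *m P) (z *m P) = phi0 x y z)
  (P_S : P *m S *m P^T = l *: @Defs.eta R) (T_ad : ad_invariant c T).

Definition ad_basis (i : 'I_7) : 'M[R]_7 := P *m ad_mx c (row i P) *m invmx P.

Definition structure_form (i j k : 'I_7) : R :=
  l^-1 * bform S (br c (row i P) (row j P)) (row k P).

Lemma br_ad_basis i (x : vec R) : br c (row i P) (x *m P) = x *m ad_basis i *m P.
Proof. by rewrite br_ad_mx /ad_basis !mulmxA mulmxKV. Qed.

Lemma structure_form_alternating : alternating structure_form.
Proof.
move=> i j k; rewrite /structure_form (invariant_form_swap S br_xx) mulrN.
split=> //; rewrite (invariant_form_cycle S_sym S_inv) (invariant_form_swap S br_xx).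
by rewrite (invariant_form_cycle S_sym S_inv) mulrN.
Qed.

Lemma contraction_structure_form i : contraction_mx structure_form i = ad_basis i.
Proof.
apply/matrixP => j k; rewrite mxE /structure_form [row j P]rowE [row k P]rowE.
rewrite br_ad_basis bform_congr P_S bformZ mulKf // bform_eta_delta mulrA eta_sign2.
by rewrite mul1r -rowE mxE.
Qed.

Lemma der_phi0_ad_basis i : der_phi0 (ad_basis i).
Proof.
move=> x y z; have := T_ad (row i P) (x *m P) (y *m P) (z *m P).
by rewrite !br_ad_basis !T_phi0.
Qed.

Lemma br_eq0 (x y : vec R) : br c x y = 0.
Proof.
apply: (br_eq0_rows P_unit) => i j.
have ad_basis0 : ad_basis i = 0.
  apply/matrixP => j' k; rewrite -contraction_structure_form !mxE.
  rewrite (contraction_der_phi0_eq0 structure_form_alternating) ?mulr0 // => i'.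
  by rewrite contraction_structure_form; apply: der_phi0_ad_basis.
by rewrite [row j P]rowE br_ad_basis ad_basis0 mulmx0 mul0mx.
Qed.

End AdInvariantG22Form.

Theorem lemma3p8 (R : realType) (c : 'I_7 -> 'I_7 -> 'I_7 -> R) (S : 'M[R]_7) :
  is_lie_algebra c -> two_step_nilpotent c ->
  scalar_product S -> index_three S -> invariant_form c S ->
  ~ (exists T : 'I_7 -> 'I_7 -> 'I_7 -> R, G22_compatible T S /\ ad_invariant c T).
Proof.
move=> [br_xx _] [_ [x [y br_xy_neq0]]] [S_sym _] _ S_inv.
move=> [T [[_ [P [l [P_unit [l_neq0 [T_phi0 P_S]]]]]] T_ad]].
by move: br_xy_neq0; rewrite (br_eq0 br_xx S_sym S_inv P_unit l_neq0 T_phi0 P_S T_ad) eqxx.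
Qed.
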